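(* Let $\underline a=(a_1,a_2,a_3)$, $\underline b=(b_1,b_2,b_3)\in\mathbb{Z}^3$ with all $a_i,b_i\equiv1\pmod4$ and $\gcd(a_1,a_2,a_3)=\gcd(b_1,b_2,b_3)=1$. The subgroup $\{1\}\times\Delta\mathbf{S}^3\subseteq G$ acts freely on $P^{10}_{\underline a,\underline b}$ if and only if $\gcd(a_1,a_2\pm a_3)=1$ and $\gcd(b_1,b_2\pm b_3)=1$.
   Context: $\mathbf{S}^3$ is the group of unit quaternions, $G=\mathbf{S}^3\times\mathbf{S}^3\times\mathbf{S}^3$, $\Delta\mathbf{S}^3=\{(q,q)\}$, $Q=\{\pm1,\pm i,\pm j,\pm k\}$ with diagonal $\Delta Q\subset G$. $\mathrm{Pin}(2)_{\underline a}=\{(e^{ia_1\theta},e^{ia_2\theta},e^{ia_3\theta})\mid\theta\in\mathbb{R}\}\cup\{(e^{ia_1\theta}j,e^{ia_2\theta}j,e^{ia_3\theta}j)\mid\theta\in\mathbb{R}\}$, $\mathrm{Pjn}(2)_{\underline b}=\{(e^{jb_1\theta},e^{jb_2\theta},e^{jb_3\theta})\}\cup\{(ie^{jb_1\theta},ie^{jb_2\theta},ie^{jb_3\theta})\}$. $P^{10}_{\underline a,\underline b}$ is the cohomogeneity-one $G$-manifold with principal isotropy group $\Delta Q$ and singular isotropy groups $\mathrm{Pin}(2)_{\underline a}$, $\mathrm{Pjn}(2)_{\underline b}$: $P^{10}_{\underline a,\underline b}=(G\times_{\mathrm{Pin}(2)_{\underline a}}\mathbf{D}^2)\cup_{G/\Delta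 Q}(G\times_{\mathrm{Pjn}(2)_{\underline b}}\mathbf{D}^2)$, where each singular isotropy group $K$ acts linearly on $\mathbf{D}^2$ extending its transitive action on the circle $K/\Delta Q$, and $G$ acts by left multiplication on the $G$-factor. Its orbits are the principal orbits $G/\Delta Q$ and the singular orbits $G/\mathrm{Pin}(2)_{\underline a}$, $G/\mathrm{Pjn}(2)_{\underline b}$. *)

From mathcomp Require Import all_boot all_order all_algebra.
From mathcomp Require Import reals trigo.
Set Implicit Arguments. Unset Strict Implicit. Unset Printing Implicit Defensive.
Import Order.TTheory GRing.Theory Num.Theory.
Local Open Scope ring_scope.

Section Quat.
Variable R : realType.

Record quat := Quat { q0 : R; q1 : R; q2 : R; q3 : R }.

Definition qmul (p q : quat) : quat :=
  Quat (q0 p * q0 q - q1 p * q1 q - q2 p * q2 q - q3 p * q3 q)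
       (q0 p * q1 q + q1 p * q0 q + q2 p * q3 q - q3 p * q2 q)
       (q0 p * q2 q - q1 p * q3 q + q2 p * q0 q + q3 p * q1 q)
       (q0 p * q3 q + q1 p * q2 q - q2 p * q1 q + q3 p * q0 q).

Definition qconj (p : quat) : quat := Quat (q0 p) (- q1 p) (- q2 p) (- q3 p).

Definition qone : quat := Quat 1 0 0 0.
Definition qi : quat := Quat 0 1 0 0.
Definition qj : quat := Quat 0 0 1 0.
Definition qk : quat := Quat 0 0 0 1.
Definition qopp (p : quat) : quat := Quat (- q0 p) (- q1 p) (- q2 p) (- q3 p).

Definition unitq (p : quat) : Prop :=
  q0 p ^+ 2 + q1 p ^+ 2 + q2 p ^+ 2 + q3 p ^+ 2 = 1.

Definition expi (t : R) : quat := Quat (cos t) (sin t) 0 0.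
Definition expj (t : R) : quat := Quat (cos t) 0 (sin t) 0.

Definition inQ (p : quat) : Prop :=
  p = qone \/ p = qopp qone \/ p = qi \/ p = qopp qi \/
  p = qj \/ p = qopp qj \/ p = qk \/ p = qopp qk.

Definition trip := (quat * quat * quat)%type.
Definition tmul (x y : trip) : trip :=
  (qmul x.1.1 y.1.1, qmul x.1.2 y.1.2, qmul x.2 y.2).
(* inverse of a unit quaternion is its conjugate *)
Definition tinv (x : trip) : trip := (qconj x.1.1, qconj x.1.2, qconj x.2).
Definition tone : trip := (qone, qone, qone).
Definition inG (x : trip) : Prop := [/\ unitq x.1.1, unitq x.1.2 & unitq x.2].

Definition DeltaQ (x : trip) : Prop := exists q, inQ q /\ x = (q, q, q).

Definition Pin2 (a1 a2 a3 : int) (x : trip) : Prop :=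
  exists t : R,
    x = (expi (a1%:~R * t), expi (a2%:~R * t), expi (a3%:~R * t)) \/
    x = (qmul (expi (a1%:~R * t)) qj, qmul (expi (a2%:~R * t)) qj,
         qmul (expi (a3%:~R * t)) qj).

Definition Pjn2 (b1 b2 b3 : int) (x : trip) : Prop :=
  exists t : R,
    x = (expj (b1%:~R * t), expj (b2%:~R * t), expj (b3%:~R * t)) \/
    x = (qmul qi (expj (b1%:~R * t)), qmul qi (expj (b2%:~R * t)),
         qmul qi (expj (b3%:~R * t))).

Definition OneDiagS3 (x : trip) : Prop :=
  exists q, unitq q /\ x = (qone, q, q).

(** The cohomogeneity-one G-set underlying P^10_{a,b}: via its orbit
    decomposition over the orbit space [0,1], a point is a pair (t, g K_t)
    with 0 <= t <= 1, g in G, where K_0 = Pin(2)_a (the zero section of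
    G x_{Pin(2)_a} D^2), K_1 = Pjn(2)_b (the zero section of the other disk
    bundle), and K_t = Delta Q for 0 < t < 1 (the principal orbits).
    The point (t, g) represents the coset g K_t. *)
Definition isotropy (a1 a2 a3 b1 b2 b3 : int) (t : R) : trip -> Prop :=
  if t == 0 then Pin2 a1 a2 a3 else if t == 1 then Pjn2 b1 b2 b3 else DeltaQ.

Definition P10_point (t : R) (g : trip) : Prop := 0 <= t <= 1 /\ inG g.

Definition P10_eq (a1 a2 a3 b1 b2 b3 : int) (t : R) (g : trip) (t' : R) (g' : trip)
  : Prop := t = t' /\ isotropy a1 a2 a3 b1 b2 b3 t (tmul (tinv g) g').

Definition acts_freely_P10 (a1 a2 a3 b1 b2 b3 : int) (H : trip -> Prop) : Prop :=
  forall h, H h -> forall t g, P10_point t g ->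
    P10_eq a1 a2 a3 b1 b2 b3 t (tmul h g) t g -> h = tone.

End Quat.

(* An element (1, q, q) fixes the point g K_t iff
   (1, g2^-1 q^-1 g2, g3^-1 q^-1 g3) lies in K_t, and conjugation preserves
   real parts.  In Pin(2)_a a first factor 1 means cos (a1 t) = 1, and equal
   real parts of the other two factors mean cos (a2 t) = cos (a3 t), i.e. one of
   (a2 -+ a3) t lies in 2piZ; coprimality with a1 then puts t, hence a2 t, in
   2piZ, so Re q = 1 and q = 1.  Conversely, if d = gcd (a1, a2 -+ a3) > 1 then
   d does not divide a2, and t = 2pi/d gives q = e^(-i a2 t) <> 1 fixing the
   point (1, 1, g3) of the singular orbit, with g3 = 1 resp. g3 = j (conjugation
   by j inverts e^(i s)).  Pjn(2)_b is the same with i and j exchanged. *)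

From mathcomp Require Import all_boot all_order all_algebra.
From mathcomp Require Import reals trigo.
From mathcomp Require Import ring lra.
Import Order.TTheory GRing.Theory Num.Theory.
Set Implicit Arguments.
Unset Strict Implicit.
Unset Printing Implicit Defensive.
Local Open Scope ring_scope.

Section Angles.
Variable R : realType.
Implicit Types x y : R.

Lemma periodicz (f : R -> R) (T : R) : periodic f T ->
  forall (k : int) x, f (x + k%:~R * T) = f x.
Proof.
move=> fT [n|n] x; first by rewrite -pmulrn mulr_natl periodicn.
rewrite NegzE intrN mulNr -pmulrn -[LHS](periodicn fT n.+1) mulr_natl.
by rewrite subrK.
Qed.

Definition in_2piZ x : Prop := exists k : int, x = k%:~R * (pi *+ 2).

Lemma in_2piZD x y : in_2piZ x -> in_2piZ y -> in_2piZ (x + y).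
Proof. by move=> [k ->] [m ->]; exists (k + m); rewrite intrD mulrDl. Qed.

Lemma in_2piZMz (k : int) x : in_2piZ x -> in_2piZ (k%:~R * x).
Proof. by move=> [m ->]; exists (k * m); rewrite intrM mulrA. Qed.

Lemma cos_2piZ x : in_2piZ x -> cos x = 1.
Proof.
by move=> [k ->]; rewrite -[_ * _]add0r (periodicz (@cosD2pi R)) cos0.
Qed.

Lemma cos_eq1P x : cos x = 1 <-> in_2piZ x.
Proof.
split=> [cx1|]; last exact: cos_2piZ.
have pi2_gt0 : 0 < pi *+ 2 :> R by rewrite mulrn_wgt0 // pi_gt0.
set k := Num.floor (x / (pi *+ 2)); set r := x - k%:~R * (pi *+ 2).
have [k_le k_gt] := andP (floor_itv (x / (pi *+ 2))).
have r_ge0 : 0 <= r by rewrite subr_ge0 -ler_pdivlMr.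
have r_lt : r < pi *+ 2.
  rewrite ltrBlDr (_ : _ + _ = (k + 1)%:~R * (pi *+ 2)) -?ltr_pdivrMr //.
  by rewrite intrD mulrDl mul1r addrC.
have cr1 : cos r = 1.
  by rewrite /r -mulNr -intrN (periodicz (@cosD2pi R)).
suff r0 : r = 0 by exists k; apply/eqP; rewrite -subr_eq0 -/r r0.
have in0pi y : 0 <= y <= pi -> y \in `[0, pi] by move=> ?; rewrite in_itv.
have [r_le|r_gt] := lerP r pi.
  apply: (cos_inj (in0pi _ _) (in0pi _ _));
    by rewrite ?cr1 ?cos0 ?r_ge0 ?lexx ?pi_ge0.
have s0 : pi *+ 2 - r = 0.
  apply: (cos_inj (in0pi _ _) (in0pi _ _)); rewrite ?cos0 ?lexx ?pi_ge0 //.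
    by rewrite subr_ge0 ltW //= lerBlDr mulr2n lerD2l ltW.
  by rewrite cosB cos2pi sin2pi cr1; ring.
by move: r_lt; rewrite -subr_gt0 s0 ltxx.
Qed.

Lemma cos_eq_cos x y : cos x = cos y -> in_2piZ (x - y) \/ in_2piZ (x + y).
Proof.
move=> cxy.
have : (sin x - sin y) * (sin x + sin y) = 0.
  by rewrite -subr_sqr !sin2cos2 cxy subrr.
move/eqP; rewrite mulf_eq0 => /orP[/eqP/subr0_eq sxy | /eqP/addr0_eq sxy];
  [left | right]; apply/cos_eq1P.
  by rewrite cosB -cxy -sxy -!expr2 cos2Dsin2.
by rewrite cosD -cxy -sxy mulrN opprK -!expr2 cos2Dsin2.
Qed.

Lemma in_2piZ_coprime (a c : int) x : gcdz a c = 1 ->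
  in_2piZ (a%:~R * x) -> in_2piZ (c%:~R * x) -> in_2piZ x.
Proof.
have [u [v]] := Bezoutz a c; move=> <- uv1 ax cx.
have -> : x = u%:~R * (a%:~R * x) + v%:~R * (c%:~R * x).
  by rewrite !mulrA -!intrM -mulrDl -intrD uv1 mul1r.
by apply: in_2piZD; apply: in_2piZMz.
Qed.

Lemma in_2piZ_div (d e : int) : d != 0 ->
  in_2piZ (e%:~R * (pi *+ 2 / d%:~R)) <-> (d %| e)%Z.
Proof.
have : pi *+ 2 != 0 :> R by rewrite gt_eqF // mulrn_wgt0 // pi_gt0.
rewrite /in_2piZ; move: (pi *+ 2) => P P_neq0 d_neq0.
have dR_neq0 : d%:~R != 0 :> R by rewrite intr_eq0.
split=> [[k ek] | /dvdzP[k ->]]; last by exists k; rewrite intrM; field.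
apply/dvdzP; exists k; apply: (@intr_inj R).
have -> : e%:~R = e%:~R * (P / d%:~R) * d%:~R / P :> R by field; apply/andP.
by rewrite ek intrM; field.
Qed.

Lemma cos_eq1_coprime (a1 a2 a3 : int) x :
  gcdz a1 (a2 + a3) = 1 -> gcdz a1 (a2 - a3) = 1 ->
  cos (a1%:~R * x) = 1 -> cos (a2%:~R * x) = cos (a3%:~R * x) ->
  cos (a2%:~R * x) = 1.
Proof.
move=> g_add g_sub /cos_eq1P a1x /cos_eq_cos a23x; apply/cos_eq1P/in_2piZMz.
case: a23x => a23x;
  [apply: (in_2piZ_coprime g_sub) | apply: (in_2piZ_coprime g_add)];
  by rewrite ?intrB ?intrD ?mulrBl ?mulrDl.
Qed.

Lemma angle_witness (a b c : int) : a != 0 -> gcdz a (gcdz b c) = 1 ->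
  gcdz a (b + c) != 1 ->
  exists x : R, [/\ cos (a%:~R * x) = 1, cos (b%:~R * x) != 1
                  & in_2piZ ((b + c)%:~R * x)].
Proof.
move=> a_neq0 g_abc; set d := gcdz a (b + c) => d_neq1.
have d_neq0 : d != 0 by rewrite gcdz_eq0 negb_and a_neq0.
have d_dvd_bc : (d %| b + c)%Z by apply: dvdz_gcdr.
exists (pi *+ 2 / d%:~R); split; first by apply/cos_eq1P/in_2piZ_div/dvdz_gcdl.
  apply/eqP => /cos_eq1P /(in_2piZ_div _ d_neq0) d_dvd_b.
  have d_dvd_c : (d %| c)%Z by rewrite -(addKr b c) rpredD ?rpredN.
  have : (d %| gcdz a (gcdz b c))%Z by rewrite !dvdz_gcd dvdz_gcdl d_dvd_b.
  rewrite g_abc dvdz1 => /eqP abs_d1; apply/(negP d_neq1)/eqP.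
  by rewrite -[d]/(Posz `|d|%N) abs_d1.
exact/(in_2piZ_div _ d_neq0).
Qed.

End Angles.

Section Quaternions.
Variable R : realType.
Implicit Types (p q g : quat R) (x y : R).

Definition qconjg g p := qmul (qconj g) (qmul p g).

Lemma quat_ext p q :
  q0 p = q0 q -> q1 p = q1 q -> q2 p = q2 q -> q3 p = q3 q -> p = q.
Proof. by case: p q => ? ? ? ? [? ? ? ?] /= -> -> -> ->. Qed.

Lemma unitq_qone : unitq (qone R). Proof. by rewrite /unitq /=; ring. Qed.
Lemma unitq_qi : unitq (qi R). Proof. by rewrite /unitq /=; ring. Qed.
Lemma unitq_qj : unitq (qj R). Proof. by rewrite /unitq /=; ring. Qed.

Lemma unitq_qconj p : unitq p -> unitq (qconj p).
Proof. by rewrite /unitq /= !sqrrN. Qed.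

Lemma unitq_expi x : unitq (expi x).
Proof. by rewrite /unitq /= -(cos2Dsin2 x); ring. Qed.

Lemma unitq_expj x : unitq (expj x).
Proof. by rewrite /unitq /= -(cos2Dsin2 x); ring. Qed.

Lemma unitq_q0_eq1 q : unitq q -> q0 q = 1 -> q = qone R.
Proof.
rewrite /unitq => uq q0_1; rewrite q0_1 expr1n in uq.
have q123 : q1 q ^+ 2 + q2 q ^+ 2 + q3 q ^+ 2 = 0 by lra.
have := sqr_ge0 (q1 q); have := sqr_ge0 (q2 q); have := sqr_ge0 (q3 q).
move=> ? ? ?; apply: quat_ext => //=;
  by apply/eqP; rewrite -sqrf_eq0; apply/eqP; lra.
Qed.

Lemma q0_conj_qmul q g : unitq g -> q0 (qmul (qconj (qmul q g)) g) = q0 q.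
Proof. by rewrite /unitq => ug; rewrite -[RHS]mulr1 -ug /=; ring. Qed.

Lemma qconjg1 p : qconjg (qone R) p = p.
Proof. by apply: quat_ext => /=; ring. Qed.

Lemma qconjgj_expi x : qconjg (qj R) (expi x) = expi (- x).
Proof. by apply: quat_ext; rewrite /= ?cosN ?sinN; ring. Qed.

Lemma qconjgi_expj x : qconjg (qi R) (expj x) = expj (- x).
Proof. by apply: quat_ext; rewrite /= ?cosN ?sinN; ring. Qed.

Lemma expi_2piZ x y : in_2piZ (x - y) -> expi x = expi y.
Proof.
move=> [k xy]; have -> : x = y + k%:~R * (pi *+ 2) by rewrite -xy addrC subrK.
by rewrite /expi (periodicz (@cosD2pi R)) (periodicz (@sinD2pi R)).
Qed.

Lemma expj_2piZ x y : in_2piZ (x - y) -> expj x = expj y.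
Proof.
move=> [k xy]; have -> : x = y + k%:~R * (pi *+ 2) by rewrite -xy addrC subrK.
by rewrite /expj (periodicz (@cosD2pi R)) (periodicz (@sinD2pi R)).
Qed.

Lemma expi_cos_eq1 x : cos x = 1 -> expi x = qone R.
Proof.
by move=> /cos_eq1P x2pi; rewrite (@expi_2piZ x 0) ?subr0 // /expi cos0 sin0.
Qed.

Lemma expj_cos_eq1 x : cos x = 1 -> expj x = qone R.
Proof.
by move=> /cos_eq1P x2pi; rewrite (@expj_2piZ x 0) ?subr0 // /expj cos0 sin0.
Qed.

End Quaternions.

Section FreeAction.
Variables (R : realType) (a1 a2 a3 b1 b2 b3 : int).
Implicit Types (x : trip R) (q g : quat R) (t th : R).
Local Notation isotropy := (isotropy a1 a2 a3 b1 b2 b3).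
Local Notation acts_freely :=
  (acts_freely_P10 a1 a2 a3 b1 b2 b3 (@OneDiagS3 R)).

Lemma Pin2_q0_eq1 x : gcdz a1 (a2 + a3) = 1 -> gcdz a1 (a2 - a3) = 1 ->
  Pin2 a1 a2 a3 x -> q0 x.1.1 = 1 -> q0 x.1.2 = q0 x.2 -> q0 x.1.2 = 1.
Proof.
move=> g_add g_sub [t [->|->]] /=; first exact: cos_eq1_coprime.
(* the other coset has first factor of real part 0 *)
by rewrite !(mulr0, mul0r, subr0) => /esym/eqP; rewrite oner_eq0.
Qed.

Lemma Pjn2_q0_eq1 x : gcdz b1 (b2 + b3) = 1 -> gcdz b1 (b2 - b3) = 1 ->
  Pjn2 b1 b2 b3 x -> q0 x.1.1 = 1 -> q0 x.1.2 = q0 x.2 -> q0 x.1.2 = 1.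
Proof.
move=> g_add g_sub [t [->|->]] /=; first exact: cos_eq1_coprime.
by rewrite !(mulr0, mul0r, subr0) => /esym/eqP; rewrite oner_eq0.
Qed.

Lemma isotropy_q0_eq1 t x :
  gcdz a1 (a2 + a3) = 1 -> gcdz a1 (a2 - a3) = 1 ->
  gcdz b1 (b2 + b3) = 1 -> gcdz b1 (b2 - b3) = 1 ->
  isotropy t x -> q0 x.1.1 = 1 -> q0 x.1.2 = q0 x.2 -> q0 x.1.2 = 1.
Proof.
move=> g_add g_sub g_badd g_bsub; rewrite /isotropy.
case: ifP => _; first exact: Pin2_q0_eq1.
case: ifP => _; first exact: Pjn2_q0_eq1.
by move=> [q [_ ->]] /= ->.
Qed.

Lemma acts_freely_of_gcdz :
  gcdz a1 (a2 + a3) = 1 -> gcdz a1 (a2 - a3) = 1 ->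
  gcdz b1 (b2 + b3) = 1 -> gcdz b1 (b2 - b3) = 1 -> acts_freely.
Proof.
move=> g_add g_sub g_badd g_bsub _ [q [uq ->]] t g [_ [ug1 ug2 ug3]] [_ iso].
suff -> : q = qone R by [].
apply: unitq_q0_eq1 => //; rewrite -(q0_conj_qmul q ug2).
apply: (isotropy_q0_eq1 g_add g_sub g_badd g_bsub iso).
  exact: (q0_conj_qmul (qone R) ug1).
exact: etrans (q0_conj_qmul q ug2) (esym (q0_conj_qmul q ug3)).
Qed.

Lemma acts_freely_qconjg t q g : acts_freely -> 0 <= t <= 1 ->
  unitq q -> unitq g -> isotropy t (qone R, q, qconjg g q) -> q = qone R.
Proof.
move=> free t01 uq ug iso.
have h_in : OneDiagS3 (qone R, qconj q, qconj q).
  by exists (qconj q); split=> //; apply: unitq_qconj.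
have g_in : P10_point t (qone R, qone R, g).
  by split=> //; split=> //; apply: unitq_qone.
have : (qone R, qconj q, qconj q) = tone R.
  apply: (free _ h_in t _ g_in); split=> //.
  rewrite (_ : tmul _ _ = (qone R, q, qconjg g q)) //.
  by congr (_, _, _); apply: quat_ext => /=; ring.
by move=> /(congr1 (fun x => q0 x.1.2)) /= q0_1; apply: unitq_q0_eq1.
Qed.

Lemma Pin2_not_acts_freely g th : unitq g ->
  cos (a1%:~R * th) = 1 -> cos (a2%:~R * th) != 1 ->
  qconjg g (expi (a2%:~R * th)) = expi (a3%:~R * th) -> ~ acts_freely.
Proof.
move=> ug a1_th a2_th a3_th free; move/eqP: a2_th; apply.
suff /(congr1 (@q0 R)) : expi (a2%:~R * th) = qone R by [].
apply: (@acts_freely_qconjg 0 _ g free _ (unitq_expi _) ug).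
  by rewrite lexx ler01.
rewrite /isotropy eqxx a3_th.
by exists th; left; rewrite (expi_cos_eq1 a1_th).
Qed.

Lemma Pjn2_not_acts_freely g th : unitq g ->
  cos (b1%:~R * th) = 1 -> cos (b2%:~R * th) != 1 ->
  qconjg g (expj (b2%:~R * th)) = expj (b3%:~R * th) -> ~ acts_freely.
Proof.
move=> ug b1_th b2_th b3_th free; move/eqP: b2_th; apply.
suff /(congr1 (@q0 R)) : expj (b2%:~R * th) = qone R by [].
apply: (@acts_freely_qconjg 1 _ g free _ (unitq_expj _) ug).
  by rewrite lexx ler01.
rewrite /isotropy oner_eq0 eqxx b3_th.
by exists th; left; rewrite (expj_cos_eq1 b1_th).
Qed.

Lemma gcdz_Pin2_of_acts_freely : a1 != 0 -> gcdz a1 (gcdz a2 a3) = 1 ->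
  acts_freely -> gcdz a1 (a2 + a3) = 1 /\ gcdz a1 (a2 - a3) = 1.
Proof.
move=> a1_neq0 g_a free; split; apply/eqP/negPn/negP => g_ne.
  have [th [a1_th a2_th a23_th]] := angle_witness R a1_neq0 g_a g_ne.
  apply: (Pin2_not_acts_freely (unitq_qj R) a1_th a2_th _ free).
  rewrite qconjgj_expi; apply/esym/expi_2piZ.
  by rewrite opprK -mulrDl -intrD addrC.
rewrite -(gcdzN a2 a3) in g_a.
have [th [a1_th a2_th a23_th]] := angle_witness R a1_neq0 g_a g_ne.
apply: (Pin2_not_acts_freely (unitq_qone R) a1_th a2_th _ free).
by rewrite qconjg1; apply/expi_2piZ; rewrite -mulrBl -intrB.
Qed.

Lemma gcdz_Pjn2_of_acts_freely : b1 != 0 -> gcdz b1 (gcdz b2 b3) = 1 ->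
  acts_freely -> gcdz b1 (b2 + b3) = 1 /\ gcdz b1 (b2 - b3) = 1.
Proof.
move=> b1_neq0 g_b free; split; apply/eqP/negPn/negP => g_ne.
  have [th [b1_th b2_th b23_th]] := angle_witness R b1_neq0 g_b g_ne.
  apply: (Pjn2_not_acts_freely (unitq_qi R) b1_th b2_th _ free).
  rewrite qconjgi_expj; apply/esym/expj_2piZ.
  by rewrite opprK -mulrDl -intrD addrC.
rewrite -(gcdzN b2 b3) in g_b.
have [th [b1_th b2_th b23_th]] := angle_witness R b1_neq0 g_b g_ne.
apply: (Pjn2_not_acts_freely (unitq_qone R) b1_th b2_th _ free).
by rewrite qconjg1; apply/expj_2piZ; rewrite -mulrBl -intrB.
Qed.

End FreeAction.

Theorem lemma2p1 (R : realType) (a1 a2 a3 b1 b2 b3 : int) :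
  (a1 = 1 %[mod 4])%Z -> (a2 = 1 %[mod 4])%Z -> (a3 = 1 %[mod 4])%Z ->
  (b1 = 1 %[mod 4])%Z -> (b2 = 1 %[mod 4])%Z -> (b3 = 1 %[mod 4])%Z ->
  gcdz a1 (gcdz a2 a3) = 1 -> gcdz b1 (gcdz b2 b3) = 1 ->
  (acts_freely_P10 a1 a2 a3 b1 b2 b3 (@OneDiagS3 R) <->
   [/\ gcdz a1 (a2 + a3) = 1, gcdz a1 (a2 - a3) = 1,
       gcdz b1 (b2 + b3) = 1 & gcdz b1 (b2 - b3) = 1]).
Proof.
move=> a1_mod4 _ _ b1_mod4 _ _ g_a g_b.
have a1_neq0 : a1 != 0 by apply/eqP => a1_0; move: a1_mod4; rewrite a1_0.
have b1_neq0 : b1 != 0 by apply/eqP => b1_0; move: b1_mod4; rewrite b1_0.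
split=> [free | [g_add g_sub g_badd g_bsub]]; last exact: acts_freely_of_gcdz.
have [g_add g_sub] := gcdz_Pin2_of_acts_freely a1_neq0 g_a free.
have [g_badd g_bsub] := gcdz_Pjn2_of_acts_freely b1_neq0 g_b free.
by split.
Qed.
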